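(* Let $n\le d$, let $\{u_i\}_{i=1}^n$ be an orthonormal family in $\mathbb{C}^d$, let $\{e_i\}$ be the standard basis of $\mathbb{C}^n$, and let $K=\sum_{i=1}^n|e_i\rangle\langle u_i\otimes\overline{u_i}|$. If $\rho$ is a PPT bipartite PSD matrix on $\mathbb{C}^d\otimes\mathbb{C}^d$ whose range is contained in the symmetric subspace $\mathbb{C}^d\vee\mathbb{C}^d$, then $Z^\Gamma_K(\rho)=K\rho^\Gamma K^*\in\mathsf{DNN}_n$.
   Context: $\rho^\Gamma$ is the partial transpose on the second factor (standard basis), $\overline{u}$ is entrywise complex conjugation, and $\rho$ is PPT if $\rho\ge0$ and $\rho^\Gamma\ge0$. The symmetric subspace $\mathbb{C}^d\vee\mathbb{C}^d$ is the $+1$ eigenspace of the flip operator $F=\sum_{i,j}|ij\rangle\langle ji|$; range in it is equivalent to $\rho F=F\rho=\rho$. $\mathsf{DNN}_n=\mathcal{M}_n^+\cap\mathcal{M}_n(\mathbb{R}_+)$ is the cone of doubly nonnegative matrices (PSD with entrywise nonnegative entries). *)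

(* Complex scalars: an arbitrary numClosedFieldType C
   (e.g. algC or complex R); order "0 <= z" means z is real and nonnegative. *)
From HB Require Import structures.
From mathcomp Require Import all_boot all_order all_algebra.
From mathcomp Require Import mxtens.
Set Implicit Arguments. Unset Strict Implicit. Unset Printing Implicit Defensive.
Import Order.TTheory GRing.Theory Num.Theory.
Local Open Scope ring_scope.

Section Defs.
Variable C : numClosedFieldType.

Definition adjmx m n (A : 'M[C]_(m, n)) : 'M[C]_(n, m) := (map_mx Num.conj A)^T.

Definition psdmx m (A : 'M[C]_m) : Prop :=
  adjmx A = A /\ forall v : 'cV[C]_m, 0 <= (adjmx v *m A *m v) 0 0.

Definition DNN m (A : 'M[C]_m) : Prop :=
  psdmx A /\ forall i j, 0 <= A i j.

(* C^d (x) C^d is indexed by 'I_(d*d) via mxtens_index (i, j) = |ij> *)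
(* partial transpose on the second factor: <ij|rho^G|kl> = <il|rho|kj> *)
Definition ptrans d (rho : 'M[C]_(d * d)) : 'M[C]_(d * d) :=
  \matrix_(a, b) rho (mxtens_index ((mxtens_unindex a).1, (mxtens_unindex b).2))
                     (mxtens_index ((mxtens_unindex b).1, (mxtens_unindex a).2)).

Definition PPT d (rho : 'M[C]_(d * d)) : Prop := psdmx rho /\ psdmx (ptrans rho).

Definition flipmx d : 'M[C]_(d * d) :=
  \matrix_(a, b) (a == mxtens_index ((mxtens_unindex b).2, (mxtens_unindex b).1))%:R.

(* symmetric subspace C^d v C^d: the +1 eigenspace of F *)
Definition in_sym d (v : 'cV[C]_(d * d)) : Prop := flipmx d *m v = v.

Definition range_in_sym d (rho : 'M[C]_(d * d)) : Prop :=
  forall v : 'cV[C]_(d * d), in_sym (rho *m v).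

(* orthonormal family u_1..u_n in C^d given as the columns of U *)
Definition orthonormal_cols d n (U : 'M[C]_(d, n)) : Prop := adjmx U *m U = 1%:M.

(* K = sum_i |e_i><u_i (x) conj(u_i)| : row i of K is (u_i (x) conj u_i)^* *)
Definition Kmx d n (U : 'M[C]_(d, n)) : 'M[C]_(n, d * d) :=
  \matrix_(i, k) (adjmx (col i U *t map_mx Num.conj (col i U))) 0 k.

Definition ZGammaK d n (U : 'M[C]_(d, n)) (rho : 'M[C]_(d * d)) : 'M[C]_n :=
  Kmx U *m ptrans rho *m adjmx (Kmx U).
End Defs.

(* The (i, j) entry of K rho^Gamma K^* is <u_i (x) conj u_i| rho^Gamma |u_j (x) conj u_j>,
   which by the definition of the partial transpose equals
   <u_i (x) u_j| rho |u_j (x) u_i>.  Since rho is Hermitian with F rho = rho, also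
   rho F = rho, so this is the quadratic form <u_i (x) u_j| rho |u_i (x) u_j> >= 0.
   Positive semidefiniteness is a congruence of rho^Gamma >= 0. *)

From mathcomp Require Import all_boot all_order all_algebra.
From mathcomp Require Import mxtens ring.
Set Implicit Arguments. Unset Strict Implicit. Unset Printing Implicit Defensive.
Import Order.TTheory GRing.Theory Num.Theory.
Local Open Scope ring_scope.

Local Notation ix i j := (@mxtens_index _ _ (i, j)).

Section Adjoint.
Variable C : numClosedFieldType.

Lemma adjmxE m n (A : 'M[C]_(m, n)) i j : adjmx A i j = (A j i)^*.
Proof. by rewrite !mxE. Qed.

Lemma adjmx_mul m n p (A : 'M[C]_(m, n)) (B : 'M[C]_(n, p)) :
  adjmx (A *m B) = adjmx B *m adjmx A.
Proof. by rewrite /adjmx map_mxM trmx_mul. Qed.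

Lemma adjmxK m n (A : 'M[C]_(m, n)) : adjmx (adjmx A) = A.
Proof. by apply/matrixP => i j; rewrite !adjmxE conjCK. Qed.

Lemma psdmx_congr m n (A : 'M[C]_m) (B : 'M[C]_(n, m)) :
  psdmx A -> psdmx (B *m A *m adjmx B).
Proof.
move=> [A_herm A_form]; split; first by rewrite !adjmx_mul adjmxK A_herm mulmxA.
by move=> v; have := A_form (adjmx B *m v); rewrite adjmx_mul adjmxK !mulmxA.
Qed.

Lemma mulmx_adj_entry m n (A : 'M[C]_m) (B : 'M[C]_(n, m)) i j :
  (B *m A *m adjmx B) i j = (row i B *m A *m adjmx (row j B)) 0 0.
Proof.
have -> : adjmx (row j B) = col j (adjmx B) by apply/matrixP => k l; rewrite !mxE.
by rewrite -row_mul !mxE; apply: eq_bigr => k _; rewrite !mxE.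
Qed.

End Adjoint.

Section Tensor.
Variable C : numClosedFieldType.

Lemma sum_tens m n (F : 'I_(m * n) -> C) :
  \sum_k F k = \sum_i \sum_j F (ix i j).
Proof.
rewrite (reindex (@mxtens_index m n)) /=; last first.
  by exists (@mxtens_unindex m n) => k _; rewrite (mxtens_indexK, mxtens_unindexK).
by rewrite pair_big; apply: eq_bigr => -[].
Qed.

Lemma ix_eq m n (i k : 'I_m) (j l : 'I_n) :
  (ix i j == ix k l) = (i == k) && (j == l).
Proof. by rewrite (inj_eq (can_inj (@mxtens_indexK m n))) xpair_eqE. Qed.

Lemma tens_cVE m n (a : 'cV[C]_m) (b : 'cV[C]_n) i j :
  (a *t b) (ix i j) 0 = a i 0 * b j 0.
Proof. by rewrite /tensmx mxE mxtens_indexK; congr (a i _ * b j _); apply: val_inj. Qed.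

Lemma form_tens m n (x y : 'cV[C]_(m * n)) (A : 'M[C]_(m * n)) :
  (adjmx x *m A *m y) 0 0 = \sum_p1 \sum_p2 \sum_q1 \sum_q2
    ((x (ix p1 p2) 0)^* * A (ix p1 p2) (ix q1 q2) * y (ix q1 q2) 0).
Proof.
rewrite mxE; under eq_bigr do rewrite mxE mulr_suml.
rewrite exchange_big sum_tens; apply: eq_bigr => p1 _; apply: eq_bigr => p2 _.
by rewrite sum_tens; apply: eq_bigr => q1 _; apply: eq_bigr => q2 _; rewrite adjmxE.
Qed.

Lemma ptrans_form_tens d (rho : 'M[C]_(d * d)) (a b c e : 'cV[C]_d) :
  (adjmx (a *t b) *m ptrans rho *m (c *t e)) 0 0 =
  (adjmx (a *t map_mx Num.conj e) *m rho *m (c *t map_mx Num.conj b)) 0 0.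
Proof.
rewrite !form_tens; apply: eq_bigr => p1 _.
rewrite exchange_big [RHS]exchange_big; apply: eq_bigr => q1 _.
rewrite exchange_big; apply: eq_bigr => q2 _; apply: eq_bigr => p2 _.
rewrite !tens_cVE /ptrans !mxE !mxtens_indexK /= !rmorphM /= conjCK; ring.
Qed.

End Tensor.

Section Flip.
Variable C : numClosedFieldType.

Lemma flipmx_mulE d k (M : 'M[C]_(d * d, k)) (i j : 'I_d) b :
  (flipmx C d *m M) (ix i j) b = M (ix j i) b.
Proof.
rewrite mxE sum_tens (bigD1 j) //= (bigD1 i) //= mxE mxtens_indexK ix_eq !eqxx mul1r.
rewrite big1 ?addr0 => [|q q_i]; last first.
  by rewrite mxE mxtens_indexK ix_eq eqxx andbT eq_sym (negbTE q_i) mul0r.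
rewrite big1 ?addr0 // => p p_j; rewrite big1 // => q _.
by rewrite mxE mxtens_indexK ix_eq [j == p]eq_sym (negbTE p_j) andbF mul0r.
Qed.

Lemma flipmx_tens d (a b : 'cV[C]_d) : flipmx C d *m (a *t b) = b *t a.
Proof.
apply/matrixP => k l; case: (mxtens_indexP k) => i j.
by rewrite ord1 flipmx_mulE !tens_cVE mulrC.
Qed.

Lemma adjmx_flipmx d : adjmx (flipmx C d) = flipmx C d.
Proof.
apply/matrixP => k l; case: (mxtens_indexP k) => i j; case: (mxtens_indexP l) => p q.
by rewrite adjmxE !mxE !mxtens_indexK conjC_nat /= !ix_eq andbC [i == q]eq_sym [j == p]eq_sym.
Qed.

Lemma range_in_sym_flipmx d (rho : 'M[C]_(d * d)) :
  range_in_sym rho -> flipmx C d *m rho = rho.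
Proof.
move=> sym_rho; apply/matrixP => a b.
have := congr1 (fun v : 'cV_(d * d) => v a 0) (sym_rho (delta_mx b 0)).
by rewrite mulmxA -!colE !mxE.
Qed.

Lemma psdmx_mul_flipmx d (rho : 'M[C]_(d * d)) :
  psdmx rho -> range_in_sym rho -> rho *m flipmx C d = rho.
Proof.
move=> [rho_herm _] /range_in_sym_flipmx F_rho.
by rewrite -[in LHS]rho_herm -adjmx_flipmx -adjmx_mul F_rho rho_herm.
Qed.

Lemma sym_mul_tensC d (rho : 'M[C]_(d * d)) (a b : 'cV[C]_d) :
  psdmx rho -> range_in_sym rho -> rho *m (a *t b) = rho *m (b *t a).
Proof.
move=> psd_rho sym_rho.
by rewrite -[in LHS](psdmx_mul_flipmx psd_rho sym_rho) -mulmxA flipmx_tens.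
Qed.

End Flip.

Lemma row_Kmx (C : numClosedFieldType) d n (U : 'M[C]_(d, n)) i :
  row i (Kmx U) = adjmx (col i U *t map_mx Num.conj (col i U)).
Proof. by apply/matrixP => k l; rewrite ord1 !mxE. Qed.

Lemma ZGammaK_entry_sym (C : numClosedFieldType) d n (U : 'M[C]_(d, n))
    (rho : 'M[C]_(d * d)) i j :
  psdmx rho -> range_in_sym rho ->
  ZGammaK U rho i j = (adjmx (col i U *t col j U) *m rho *m (col i U *t col j U)) 0 0.
Proof.
move=> psd_rho sym_rho.
rewrite /ZGammaK mulmx_adj_entry !row_Kmx adjmxK ptrans_form_tens !map_mxCK.
by rewrite -!mulmxA (sym_mul_tensC _ _ psd_rho sym_rho).
Qed.

Theorem mainTheorem11 (C : numClosedFieldType) (n d : nat) (hnd : (n <= d)%N)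
  (U : 'M[C]_(d, n)) (hU : orthonormal_cols U)
  (rho : 'M[C]_(d * d)) (hrho : PPT rho) (hsym : range_in_sym rho) :
  DNN (ZGammaK U rho).
Proof.
case: hrho => psd_rho psd_ptrans; split; first exact: psdmx_congr.
by move=> i j; rewrite ZGammaK_entry_sym //; apply: psd_rho.2.
Qed.
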